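(* Let $1\le p\le 2$ and $0\le\nu\le\frac{\pi}{2}$. The function $K(\theta)=\cos^p(\theta)+\cos^p(\frac{\pi}{2}-\nu-\theta)$ on the interval $0\le\theta\le\frac{\pi}{2}-\nu$ attains its minimum only at the endpoints of the interval. In particular $K(\theta)\ge 1+\sin^p\nu$ for all such $\theta$. *)

From HB Require Import structures.
From mathcomp Require Import all_boot all_order all_algebra.
From mathcomp Require Import all_classical all_reals all_analysis.
Set Implicit Arguments. Unset Strict Implicit. Unset Printing Implicit Defensive.
Import Order.TTheory GRing.Theory Num.Theory.
Local Open Scope ring_scope.

(* K(theta) = cos^p(theta) + cos^p(pi/2 - nu - theta); powR with 0 `^ p = 0 for p <> 0. *)
Definition Kfun (R : realType) (p nu theta : R) : R :=
  cos theta `^ p + cos (pi / 2 - nu - theta) `^ p.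

(* Write A = cos^2 x, B = cos^2 y and C = cos^2 (x + y) for x, y >= 0 with
   x + y <= pi/2.  The identity A + B = 1 + C + 2 cos (x + y) sin x sin y and the
   monotonicity of cos give C <= A <= 1 and A + B >= 1 + C: up to increasing B,
   the pair (A, B) is obtained from (1, C) by moving both points towards each
   other.  Since cos^p = (cos^2)^(p/2) and t |-> t^(p/2) is concave for p <= 2,
   this yields cos^p x + cos^p y >= 1 + cos^p (x + y), strictly unless x y = 0 or
   (p = 2 and x + y = pi/2).  Taking x = theta and y = pi/2 - nu - theta gives
   K(theta) >= 1 + sin^p nu = K(0) = K(pi/2 - nu). *)

From HB Require Import structures.
From mathcomp Require Import all_boot all_order all_algebra.
From mathcomp Require Import all_classical all_reals all_analysis.
From mathcomp Require Import ring lra.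
Import Order.TTheory GRing.Theory Num.Theory.
Local Open Scope ring_scope.

Section powR_concavity.
Variable R : realType.
Implicit Types q a l u v A B C : R.

Lemma concave_powR q l u v : 0 < q -> q <= 1 ->
  0 <= l -> l <= 1 -> 0 <= u -> 0 <= v ->
  l * u `^ q + (1 - l) * v `^ q <= (l * u + (1 - l) * v) `^ q.
Proof.
move=> q0 q1 l0 l1 u0 v0.
have s0 : 0 <= l * u `^ q + (1 - l) * v `^ q.
  by rewrite addr_ge0 // mulr_ge0 // ?powR_ge0 ?subr_ge0.
have invq1 : 1 <= q^-1 by rewrite invf_ge1.
(* convexity of [t `^ q^-1] applied to [u `^ q] and [v `^ q] *)
have := @convex_powR R _ invq1 (Itv01 l0 l1) (u `^ q) (v `^ q).
rewrite !inE /= !in_itv /= !andbT !powR_ge0 => /(_ isT isT).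
rewrite [X in X `^ _ <= _]convRE convRE /= -!powRrM mulfV ?gt_eqF // !powRr1 //.
move=> /(ge0_ler_powR (ltW q0)); rewrite -powRrM mulVf ?gt_eqF // powRr1 //.
by apply; rewrite nnegrE ?powR_ge0 // addr_ge0 // mulr_ge0 // subr_ge0.
Qed.

Lemma powR_majorization q A B C : 0 < q -> q <= 1 ->
  0 <= C -> C <= A -> A <= 1 -> 1 + C <= A + B ->
  1 + C `^ q <= A `^ q + B `^ q.
Proof.
move=> q0 q1 C0 CA A1 hsum.
suff : 1 + C `^ q <= A `^ q + (1 + C - A) `^ q.
  have : (1 + C - A) `^ q <= B `^ q by apply: ge0_ler_powR; rewrite ?nnegrE; lra.
  lra.
have [C1|C1] := eqVneq C 1.
  have -> : 1 + C - A = C by lra.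
  have -> : A = 1 by lra.
  by rewrite powR1 addrC.
have C1' : C < 1 by rewrite lt_neqAle C1 /=; lra.
(* [A] and [1 + C - A] are the convex combinations of [C] and [1] with weights [l] and [1 - l] *)
set l := (1 - A) / (1 - C).
have l0 : 0 <= l by rewrite divr_ge0 //; lra.
have l1 : l <= 1 by rewrite ler_pdivrMr; lra.
have eA : A = l * C + (1 - l) * 1 by rewrite /l; field; lra.
have eA' : 1 + C - A = (1 - l) * C + (1 - (1 - l)) * 1 by rewrite /l; field; lra.
have := @concave_powR q l C 1 q0 q1 l0 l1 C0 ler01.
have := @concave_powR q (1 - l) C 1 q0 q1 ltac:(lra) ltac:(lra) C0 ler01.
rewrite -eA -eA' powR1; lra.
Qed.

Lemma powR_majorization_lt q A B C : 0 < q -> q <= 1 ->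
  0 <= C -> C <= A -> A <= 1 -> 1 + C < A + B ->
  1 + C `^ q < A `^ q + B `^ q.
Proof.
move=> q0 q1 C0 CA A1 hsum.
have := @powR_majorization q A (1 + C - A) C q0 q1 C0 CA A1 ltac:(lra).
have : (1 + C - A) `^ q < B `^ q by apply: gt0_ltr_powR; rewrite ?nnegrE; lra.
lra.
Qed.

Lemma ltr_powR_self a q : 0 < a -> a < 1 -> 0 < q -> q < 1 -> a < a `^ q.
Proof.
move=> a0 a1 q0 q1.
have lna : ln a < 0 by rewrite ln_lt0 // a0.
by rewrite /powR gt_eqF // -{1}(@lnK R a) ?posrE // ltr_expR; nra.
Qed.

Lemma powR_sqr a q : 0 <= a -> a `^ q = (a ^+ 2) `^ (q / 2).
Proof.
by move=> a0; rewrite -powR_mulrn // -powRrM mulrCA mulfV ?mulr1.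
Qed.

End powR_concavity.

Section cos_quarter.
Variable R : realType.
Implicit Types x y : R.

Lemma cos2Dcos2 x y :
  cos x ^+ 2 + cos y ^+ 2 = 1 + cos (x + y) ^+ 2 + 2 * cos (x + y) * sin x * sin y.
Proof.
rewrite cosD.
have -> : forall a b c d : R,
    1 + (a * c - b * d) ^+ 2 + 2 * (a * c - b * d) * b * d
    = 1 + a ^+ 2 * c ^+ 2 - b ^+ 2 * d ^+ 2 by move=> *; ring.
by rewrite !sin2cos2; ring.
Qed.

Lemma ler_cos x y : 0 <= x -> x <= y -> y <= pi -> cos y <= cos x.
Proof.
move=> x0 xy ypi; rewrite leNgt ltr_cos -?leNgt // in_itv /=.
all: try (apply/andP; split).
all: lra.
Qed.

Let cos_ge0 (z : R) : 0 <= z -> z <= pi / 2 -> 0 <= cos z.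
Proof.
move=> z0 z1; apply: cos_ge0_pihalf; rewrite z1 andbT (le_trans _ z0) //.
by rewrite oppr_le0 divr_ge0 // pi_ge0.
Qed.

Lemma sqr_cosD_le x y : 0 <= x -> 0 <= y -> x + y <= pi / 2 ->
  cos (x + y) ^+ 2 <= cos x ^+ 2.
Proof.
move=> x0 y0 xy; have pi0 := @pi_gt0 R.
have cxy : 0 <= cos (x + y) by apply: cos_ge0; lra.
have cx : 0 <= cos x by apply: cos_ge0; lra.
by rewrite ler_sqr ?nnegrE //; apply: ler_cos; lra.
Qed.

Lemma sqr_cos_sum_ge x y : 0 <= x -> 0 <= y -> x + y <= pi / 2 ->
  1 + cos (x + y) ^+ 2 <= cos x ^+ 2 + cos y ^+ 2.
Proof.
move=> x0 y0 xy; have pi0 := @pi_gt0 R.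
have cxy : 0 <= cos (x + y) by apply: cos_ge0; lra.
have sx : 0 <= sin x by apply: sin_ge0_pi; apply/andP; split; lra.
have sy : 0 <= sin y by apply: sin_ge0_pi; apply/andP; split; lra.
by rewrite cos2Dcos2 lerDl !mulr_ge0.
Qed.

Lemma sqr_cos_sum_gt x y : 0 < x -> 0 < y -> x + y < pi / 2 ->
  1 + cos (x + y) ^+ 2 < cos x ^+ 2 + cos y ^+ 2.
Proof.
move=> x0 y0 xy; have pi0 := @pi_gt0 R.
have cxy : 0 < cos (x + y) by apply: cos_gt0_pihalf; apply/andP; split; lra.
have sx : 0 < sin x by apply: sin_gt0_pi; apply/andP; split; lra.
have sy : 0 < sin y by apply: sin_gt0_pi; apply/andP; split; lra.
by rewrite cos2Dcos2 ltrDl !mulr_gt0.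
Qed.

Lemma cos_powR_sum_ge p x y : 0 < p -> p <= 2 ->
  0 <= x -> 0 <= y -> x + y <= pi / 2 ->
  1 + cos (x + y) `^ p <= cos x `^ p + cos y `^ p.
Proof.
move=> p0 p2 x0 y0 xy; have pi0 := @pi_gt0 R.
have cx : 0 <= cos x by apply: cos_ge0; lra.
rewrite !(@powR_sqr R _ p) ?cos_ge0 //; try lra.
apply: powR_majorization; try lra.
- exact: sqr_ge0.
- exact: sqr_cosD_le.
- by rewrite expr_le1 ?cos_le1.
- exact: sqr_cos_sum_ge.
Qed.

Lemma cos_powR_sum_gt p x y : 0 < p -> p <= 2 ->
  0 < x -> 0 < y -> x + y <= pi / 2 -> p < 2 \/ x + y < pi / 2 ->
  1 + cos (x + y) `^ p < cos x `^ p + cos y `^ p.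
Proof.
move=> p0 p2 x0 y0 xy p_or_xy; have pi0 := @pi_gt0 R.
have cx : 0 < cos x by apply: cos_gt0_pihalf; apply/andP; split; lra.
have cy : 0 < cos y by apply: cos_gt0_pihalf; apply/andP; split; lra.
rewrite !(@powR_sqr R _ p) ?cos_ge0 //; try lra.
have [xy_lt|xy_ge] := ltP (x + y) (pi / 2).
  apply: powR_majorization_lt; try lra.
  - exact: sqr_ge0.
  - exact: sqr_cosD_le (ltW x0) (ltW y0) xy.
  - by rewrite expr_le1 ?cos_le1 ?ltW.
  - exact: sqr_cos_sum_gt x0 y0 xy_lt.
(* on the boundary [cos (x + y) = 0]; strictness comes from [t < t `^ (p / 2)] on ]0, 1[ *)
have p_lt2 : p < 2 by case: p_or_xy => //; lra.
have cosxy0 : cos (x + y) = 0 by rewrite (_ : x + y = pi / 2) ?cos_pihalf //; lra.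
have := cos2Dcos2 x y; rewrite cosxy0 mulr0 !mul0r expr0n /= !addr0 => sum1.
have cx2 : 0 < cos x ^+ 2 by rewrite exprn_gt0.
have cy2 : 0 < cos y ^+ 2 by rewrite exprn_gt0.
have := @ltr_powR_self R (cos x ^+ 2) (p / 2) cx2 ltac:(lra) ltac:(lra) ltac:(lra).
have := @ltr_powR_self R (cos y ^+ 2) (p / 2) cy2 ltac:(lra) ltac:(lra) ltac:(lra).
rewrite powR0 ?gt_eqF //; lra.
Qed.

End cos_quarter.

Section Kfun_bounds.
Variable R : realType.
Implicit Types p nu theta : R.

Lemma cos_pihalfB nu : cos (pi / 2 - nu) = sin nu :> R.
Proof. by rewrite -cosN opprB cosBpihalf. Qed.

Lemma Kfun0 p nu : Kfun p nu 0 = 1 + sin nu `^ p.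
Proof. by rewrite /Kfun cos0 powR1 subr0 cos_pihalfB. Qed.

Lemma Kfun_pihalfB p nu : Kfun p nu (pi / 2 - nu) = 1 + sin nu `^ p.
Proof. by rewrite /Kfun subrr cos0 powR1 cos_pihalfB addrC. Qed.

Let split_pihalfB nu theta : theta + (pi / 2 - nu - theta) = pi / 2 - nu.
Proof. by rewrite addrC subrK. Qed.

Lemma Kfun_ge p nu theta : 0 < p -> p <= 2 -> 0 <= nu ->
  0 <= theta -> theta <= pi / 2 - nu -> 1 + sin nu `^ p <= Kfun p nu theta.
Proof.
move=> p0 p2 nu0 th0 th1.
have := @cos_powR_sum_ge R p theta (pi / 2 - nu - theta) p0 p2 th0.
by rewrite split_pihalfB cos_pihalfB; apply; lra.
Qed.

Lemma Kfun_gt p nu theta : 0 < p -> p <= 2 -> 0 <= nu -> ~ (p = 2 /\ nu = 0) ->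
  0 < theta -> theta < pi / 2 - nu -> 1 + sin nu `^ p < Kfun p nu theta.
Proof.
move=> p0 p2 nu0 not_const th0 th1.
have := @cos_powR_sum_gt R p theta (pi / 2 - nu - theta) p0 p2 th0.
by rewrite split_pihalfB cos_pihalfB; apply; lra.
Qed.

End Kfun_bounds.

Theorem lemma2p4 (R : realType) (p nu : R)
  (hp1 : 1 <= p) (hp2 : p <= 2) (hnu0 : 0 <= nu) (hnu1 : nu <= pi / 2) :
  (* the minimum over [0, pi/2 - nu] is attained at the endpoints *)
  (forall theta : R, 0 <= theta -> theta <= pi / 2 - nu ->
     Kfun p nu 0 <= Kfun p nu theta /\ Kfun p nu (pi / 2 - nu) <= Kfun p nu theta) /\
  (* ... and only there (excluding the degenerate constant case p = 2, nu = 0) *)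
  (~ (p = 2 /\ nu = 0) ->
   forall theta : R, 0 < theta -> theta < pi / 2 - nu ->
     Num.min (Kfun p nu 0) (Kfun p nu (pi / 2 - nu)) < Kfun p nu theta) /\
  (* in particular *)
  (forall theta : R, 0 <= theta -> theta <= pi / 2 - nu ->
     1 + sin nu `^ p <= Kfun p nu theta).
Proof.
have p0 : 0 < p by lra.
rewrite Kfun0 Kfun_pihalfB minxx.
split; [|split].
- by move=> theta th0 th1; split; exact: Kfun_ge.
- by move=> not_const theta th0 th1; exact: Kfun_gt.
- by move=> theta; exact: Kfun_ge.
Qed.
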